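(* Let $N_1,N_2\geqslant 1$ be real numbers and let $\alpha,\beta$ be real numbers with $0<\alpha,\beta\leqslant 1$. Define $$T(N_1,N_2,\alpha,\beta)=\sum_{\substack{n_1\sim N_1,\ n_2\sim N_2\\ n_1\neq n_2}}\frac{1}{|n_1^{\alpha}-n_2^{\alpha}|^{\beta}},$$ where $n_1,n_2$ range over integers. Then $$T(N_1,N_2,\alpha,\beta)\ll (N_1N_2)^{1-\alpha\beta/2}\log N_1\log N_2.$$
   Context: The notation $n\sim N$ means $N<n\leqslant 2N$. *)

From HB Require Import structures.
From mathcomp Require Import all_boot all_order all_algebra.
From mathcomp Require Import all_classical all_reals all_analysis.
Set Implicit Arguments. Unset Strict Implicit. Unset Printing Implicit Defensive.
Import Order.TTheory GRing.Theory Num.Theory.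
Local Open Scope ring_scope.

(* n ~ N means N < n <= 2N.  Every such natural number n satisfies
   n < Num.truncn (2N) + 1, so summing over 0 <= n < truncn(2N)+1 with the
   condition N < n <= 2N ranges exactly over the integers n ~ N (for N >= 1
   these are positive, so negative integers never occur). *)
Definition simN {R : realType} (N : R) (n : nat) : bool :=
  (N < n%:R) && (n%:R <= 2 * N).

Definition Tsum {R : realType} (N1 N2 a b : R) : R :=
  \sum_(0 <= n1 < (Num.truncn (2 * N1)).+1 | simN N1 n1)
    \sum_(0 <= n2 < (Num.truncn (2 * N2)).+1 | simN N2 n2 && (n1 != n2))
      (`| (n1%:R `^ a) - (n2%:R `^ a) | `^ b)^-1.

(* For 0 <= x < y <= V, concavity of t |-> t^a (Bernoulli's inequality at t = x/y) gives
   y^a - x^a >= a V^(a-1) (y - x), and y - x <= V gives (y - x)^b >= V^(b-1) (y - x); hence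
   |x^a - y^a|^(-b) <= a^(-b) V^(1-ab) / |x - y|.  Take V = 2 N2 with N1 <= N2: the sum over
   n2 of 1/|n1 - n2| is at most two harmonic sums, O(log N2), and there are at most 3 N1
   values of n1, so T << N1 N2^(1-ab) log N2 <= (N1 N2)^(1-ab/2) log N1 log N2.  The case
   N2 < N1 follows since T is symmetric in N1 and N2. *)

From HB Require Import structures.
From mathcomp Require Import all_boot all_order all_algebra.
From mathcomp Require Import all_classical all_reals all_analysis.
From mathcomp Require Import ring lra.
Set Implicit Arguments. Unset Strict Implicit. Unset Printing Implicit Defensive.
Import Order.TTheory GRing.Theory Num.Theory.
Local Open Scope ring_scope.

Section powR_bounds.
Variable R : realType.
Implicit Types a b r x y V t e : R.

Lemma ler_powR2r r x y : 0 <= r -> 0 <= x -> x <= y -> x `^ r <= y `^ r.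
Proof. by move=> r0 x0 xy; rewrite ge0_ler_powR ?nnegrE // (le_trans x0). Qed.

(* Young's inequality with the conjugate exponents 1/a and 1/(1-a). *)
Lemma powR_le_affine a t : 0 < a <= 1 -> 0 <= t -> t `^ a <= a * t + (1 - a).
Proof.
move=> /andP[a0 a1] t0.
have [->|a_neq1] := eqVneq a 1; first by rewrite powRr1 // mul1r subrr addr0.
have a_lt1 : a < 1 by rewrite lt_neqAle a_neq1 a1.
have := @conjugate_powR R (t `^ a) 1 a^-1 (1 - a)^-1 (powR_ge0 _ _) ler01.
rewrite invr_gt0 a0 invr_gt0 subr_gt0 a_lt1 !invrK addrC subrK.
move=> /(_ isT isT erefl).
by rewrite mulr1 -powRrM mulfV ?gt_eqF // powRr1 // powR1 mul1r (mulrC t).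
Qed.

Lemma powR_subr_ge a x y : 0 < a <= 1 -> 0 <= x -> 0 < y -> x <= y ->
  a * (y - x) <= y `^ (1 - a) * (y `^ a - x `^ a).
Proof.
move=> ha x0 y0 xy.
have xyy : x = x / y * y by rewrite divfK ?gt_eqF.
have t0 : 0 <= x / y by rewrite divr_ge0 // ltW.
have ya0 : 0 < y `^ a by rewrite powR_gt0.
have powR_split : y `^ (1 - a) * y `^ a = y.
  by rewrite -powRD ?subrK ?powRr1 ?ltW //; apply/implyP; rewrite gt_eqF.
have xa_le : x `^ a <= (a * (x / y) + (1 - a)) * y `^ a.
  by rewrite {1}xyy powRM ?(ltW y0) // ler_pM2r // powR_le_affine.
have -> : a * (y - x) = y `^ (1 - a) * (y `^ a * (a * (1 - x / y))).
  by rewrite mulrA powR_split; field; rewrite gt_eqF.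
rewrite ler_wpM2l ?powR_ge0 //.
move: xa_le; set u := y `^ a; set s := x / y; set v := x `^ a; lra.
Qed.

Lemma le_powR_mul_powR b t V : 0 <= b <= 1 -> 0 <= t -> t <= V ->
  t <= t `^ b * V `^ (1 - b).
Proof.
move=> /andP[b0 b1] t0 tV.
have t_split : t = t `^ b * t `^ (1 - b).
  by rewrite -powRD ?subrKC ?powRr1 ?oner_eq0.
by rewrite {1}t_split ler_wpM2l ?powR_ge0 // ler_powR2r ?subr_ge0.
Qed.

Lemma powR_dist_ge a b x y V : 0 < a <= 1 -> 0 < b <= 1 ->
  0 <= x -> x < y -> y <= V ->
  a `^ b * (y - x) <= V `^ (1 - a * b) * (y `^ a - x `^ a) `^ b.
Proof.
move=> ha /andP[b0 b1] x0 xy yV.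
have /andP[a0 a1] := ha.
have y0 : 0 < y by apply: le_lt_trans xy.
have d0 : 0 <= y - x by rewrite subr_ge0 ltW.
have D0 : 0 <= y `^ a - x `^ a.
  by rewrite subr_ge0 ler_powR2r // ltW.
have mean_value : a * (y - x) <= V `^ (1 - a) * (y `^ a - x `^ a).
  apply: le_trans (powR_subr_ge ha x0 y0 (ltW xy)) _.
  by rewrite ler_wpM2r // ler_powR2r ?subr_ge0 // ltW.
have mean_value_b : a `^ b * (y - x) `^ b <= V `^ ((1 - a) * b) * (y `^ a - x `^ a) `^ b.
  rewrite -powRM ?(ltW a0) // powRrM -powRM ?powR_ge0 //.
  by rewrite ler_powR2r ?mulr_ge0 // ltW.
have d_le : y - x <= (y - x) `^ b * V `^ (1 - b).
  rewrite le_powR_mul_powR ?(ltW b0) ?b1 // lerBlDr (le_trans yV) // lerDl //.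
have -> : 1 - a * b = (1 - a) * b + (1 - b) by ring.
rewrite powRD; last by apply/implyP => _; rewrite gt_eqF // (lt_le_trans y0).
apply: le_trans (ler_wpM2l (powR_ge0 _ _) d_le) _.
rewrite mulrA; apply: le_trans (ler_wpM2r (powR_ge0 _ _) mean_value_b) _.
by rewrite mulrAC.
Qed.

(* No hypothesis x != y is needed: for x = y both sides are 0, since 0^-1 = 0. *)
Lemma inv_powR_dist_le a b x y V : 0 < a <= 1 -> 0 < b <= 1 ->
  0 <= x -> 0 <= y -> x <= V -> y <= V ->
  (`|x `^ a - y `^ a| `^ b)^-1 <= (a `^ b)^-1 * V `^ (1 - a * b) / `|x - y|.
Proof.
move=> ha hb; have [/andP[a0 _] /andP[b0 _]] := (ha, hb).
wlog xy : x y / x <= y => [wlog_xy x0 y0 xV yV|].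
  have [xy|/ltW yx] := leP x y; first exact: wlog_xy.
  by rewrite distrC (distrC x); apply: wlog_xy.
move=> x0 _ _ yV; have [<-|neq_xy] := eqVneq x y.
  by rewrite !subrr normr0 powR0 ?invr0 ?mulr0 // gt_eqF.
have lt_xy : x < y by rewrite lt_neqAle neq_xy.
have lt_xya : x `^ a < y `^ a.
  by rewrite gt0_ltr_powR ?nnegrE // (le_trans x0 (ltW lt_xy)).
rewrite distrC [`|x - y|]distrC !gtr0_norm ?subr_gt0 //.
rewrite -mulrA ler_pdivlMl ?powR_gt0 // ler_pdivlMr ?subr_gt0 // mulrAC.
by rewrite ler_pdivrMr ?powR_gt0 ?subr_gt0 // powR_dist_ge.
Qed.

Lemma mulr_powR_le x y e : 0 <= e -> 0 <= x -> x <= y ->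
  x * y `^ (1 - e) <= (x * y) `^ (1 - e / 2).
Proof.
move=> e0 x0 xy; have y0 := le_trans x0 xy.
have [y0_eq|y_neq0] := eqVneq y 0.
  have -> : x = 0 by apply/eqP; rewrite eq_le -{1}y0_eq xy x0.
  by rewrite !mul0r powR_ge0.
have x_split : x = x `^ (1 - e / 2) * x `^ (e / 2).
  by rewrite -powRD ?subrK ?powRr1 ?oner_eq0.
have y_split : y `^ (1 - e / 2) = y `^ (e / 2) * y `^ (1 - e).
  by rewrite -powRD ?y_neq0 ?implybT //; congr (_ `^ _); field.
rewrite powRM // y_split {1}x_split -mulrA ler_wpM2l ?powR_ge0 //.
by rewrite ler_wpM2r ?powR_ge0 // ler_powR2r ?divr_ge0.
Qed.

End powR_bounds.

Section log_bounds.
Variable R : realType.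

Lemma ln_subr_ge (x y : R) : 0 < x -> 0 < y -> (y - x) / y <= ln y - ln x.
Proof.
move=> x0 y0.
have := @le_ln1Dx R (x / y - 1).
rewrite subrKC lnM ?posrE ?invr_gt0 // lnV ?posrE //.
have -> : (y - x) / y = 1 - x / y by rewrite mulrBl divff ?gt_eqF.
by move=> /(_ _); rewrite -subr_gt0 opprK subrK divr_gt0 // => /(_ isT); lra.
Qed.

Lemma one_addr_ln_mul_le (k N : R) : 1 <= k -> 2 <= N ->
  1 + ln (k * N) <= ((1 + ln k) / ln 2 + 1) * ln N.
Proof.
move=> k1 N2; have ln2 : 0 < ln (2 : R) by rewrite ln_gt0 // ltr1n.
have k0 : 0 < k by rewrite (lt_le_trans ltr01).
rewrite lnM ?posrE ?(lt_le_trans _ N2) // mulrDl mul1r addrA lerD2r.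
rewrite mulrAC ler_pdivlMr // ler_wpM2l ?addr_ge0 ?ln_ge0 //.
by rewrite ler_ln ?posrE ?(lt_le_trans _ N2).
Qed.

Lemma series0 (u : R ^nat) : series u 0 = 0.
Proof. by rewrite /series /= big_geq. Qed.

Lemma series_harmonic_ge0 n : 0 <= series (@harmonic R) n.
Proof. by rewrite sumr_ge0 // => i _; exact: harmonic_ge0. Qed.

Lemma series_harmonic_le_ln n (X : R) : 1 <= X -> n%:R <= X ->
  series harmonic n <= 1 + ln X.
Proof.
move=> X1 nX; have X0 : 0 < X := lt_le_trans ltr01 X1.
case: n nX => [|n] nX; first by rewrite series0 addr_ge0 // ln_ge0.
apply: (@le_trans _ _ (1 + ln n.+1%:R)); last by rewrite lerD2l ler_ln ?posrE ?ltr0n.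
elim: n {nX} => [|n IH]; first by rewrite seriesS series0 /= invr1 ln1 !addr0.
have step : harmonic n.+1 <= ln n.+2%:R - ln n.+1%:R :> R.
  by have := ln_subr_ge (ltr0n R n.+1) (ltr0n R n.+2); rewrite -natrB // subSnn mul1r.
by rewrite seriesSr; move: IH step; lra.
Qed.

(* The term i = n is 0, since 0^-1 = 0. *)
Lemma sum_inv_distn_le n U :
  \sum_(0 <= i < U) `|n%:R - i%:R|^-1 <= series harmonic n + series harmonic U :> R.
Proof.
elim: U n => [|U IH] n.
  by rewrite big_geq // addr_ge0 // series_harmonic_ge0.
rewrite big_nat_recl // seriesS; case: n => [|n].
  rewrite subrr normr0 invr0 add0r.
  under eq_bigr do rewrite sub0r normrN ger0_norm //.
  by rewrite series0 add0r lerDr harmonic_ge0.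
under eq_bigr do rewrite !mulrS opprD addrACA subrr add0r.
rewrite subr0 ger0_norm // seriesS.
by rewrite -addrA lerD2l (le_trans (IH n)) // lerD2l lerDr harmonic_ge0.
Qed.

End log_bounds.

Section simN_sums.
Variable R : realType.

Lemma Tsum_sym (N1 N2 a b : R) : Tsum N1 N2 a b = Tsum N2 N1 a b.
Proof.
rewrite /Tsum (exchange_big_dep_nat (simN N2)) => [|i j _ _ _ /andP[] //].
apply: eq_bigr => n2 h2; apply: eq_big => [n1|n1 _]; first by rewrite h2 eq_sym.
by rewrite distrC.
Qed.

Lemma sum_simN_le (N c : R) (F : nat -> R) : 1 <= N -> 0 <= c ->
  (forall n, simN N n -> F n <= c) ->
  \sum_(0 <= n < (Num.truncn (2 * N)).+1 | simN N n) F n <= 3 * N * c.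
Proof.
move=> N1 c0 Fc.
apply: (@le_trans _ _ (\sum_(0 <= n < (Num.truncn (2 * N)).+1) c)).
  by rewrite big_mkcond ler_sum // => n _; case: ifP => // /Fc.
rewrite sumr_const_nat subn0 -[c *+ _]mulr_natl; apply: ler_wpM2r => //.
have : (Num.truncn (2 * N))%:R <= 2 * N by rewrite truncn_le mulr_ge0 // (le_trans ler01).
by rewrite -natr1; lra.
Qed.

End simN_sums.

Section Tsum_bounds.
Variables (R : realType) (a b : R).
Hypotheses (ha : 0 < a <= 1) (hb : 0 < b <= 1).

Lemma sum_simN_inv_powR_dist_le (N : R) (m : nat) : 1 <= N -> m%:R <= 2 * N ->
  \sum_(0 <= n < (Num.truncn (2 * N)).+1 | simN N n && (m != n))
      (`|m%:R `^ a - n%:R `^ a| `^ b)^-1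
    <= (a `^ b)^-1 * (2 * N) `^ (1 - a * b) * (2 * (1 + ln (3 * N))).
Proof.
move=> N1 m2N; set K := _ * _ `^ _.
have K0 : 0 <= K by rewrite mulr_ge0 ?powR_ge0 // invr_ge0 powR_ge0.
have N0 : 0 <= N by rewrite (le_trans ler01).
apply: (@le_trans _ _ (\sum_(0 <= n < (Num.truncn (2 * N)).+1) K / `|m%:R - n%:R|)).
  rewrite big_mkcond ler_sum // => n _.
  case: ifP => [/andP[/andP[_ n2N] _]|_]; last by rewrite divr_ge0.
  exact: inv_powR_dist_le.
rewrite -mulr_sumr ler_wpM2l // (le_trans (sum_inv_distn_le R m _)) //.
have trunc_le : (Num.truncn (2 * N))%:R <= 2 * N by rewrite truncn_le mulr_ge0.
have /series_harmonic_le_ln hm : m%:R <= 3 * N by lra.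
have /series_harmonic_le_ln hU : (Num.truncn (2 * N)).+1%:R <= 3 * N.
  by rewrite -natr1; lra.
have N3 : 1 <= 3 * N by lra.
by move: (hm N3) (hU N3); lra.
Qed.

Lemma Tsum_le (N1 N2 : R) : 1 <= N1 -> N1 <= N2 ->
  Tsum N1 N2 a b
    <= 3 * N1 * ((a `^ b)^-1 * (2 * N2) `^ (1 - a * b) * (2 * (1 + ln (3 * N2)))).
Proof.
move=> N1_ge1 N12; have N2_ge1 := le_trans N1_ge1 N12.
apply: sum_simN_le => // [|n /andP[_ n2N1]].
  rewrite !mulr_ge0 ?invr_ge0 ?powR_ge0 // addr_ge0 // ln_ge0 //; lra.
apply: sum_simN_inv_powR_dist_le => //; lra.
Qed.

Let ln_coeff : R := (1 + ln 3) / ln 2 + 1.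

Let ln2_gt0 : 0 < ln (2 : R).
Proof. by rewrite ln_gt0 // ltr1n. Qed.

Let ln_coeff_gt0 : 0 < ln_coeff.
Proof.
have ln3 : 0 <= ln (3 : R) by rewrite ln_ge0 // ler1n.
by rewrite /ln_coeff ltr_wpDl // divr_ge0 ?addr_ge0 // ltW.
Qed.

Lemma Tsum_le_ln (N1 N2 : R) : 2 <= N1 -> N1 <= N2 ->
  Tsum N1 N2 a b <= 12 * (a `^ b)^-1 * ln_coeff * (N1 * N2 `^ (1 - a * b)) * ln N2.
Proof.
have [/andP[a0 _] /andP[b0 _]] := (ha, hb).
move=> N1_ge2 N12; have N2_ge2 := le_trans N1_ge2 N12.
have [N1_gt0 N2_gt0] : 0 < N1 /\ 0 < N2 by split; lra.
apply: le_trans (Tsum_le (le_trans (ler1n R 2) N1_ge2) N12) _.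
set A := (a `^ b)^-1; set e := a * b.
have A0 : 0 <= A by rewrite invr_ge0 powR_ge0.
have pow2N2 : (2 * N2) `^ (1 - e) <= 2 * N2 `^ (1 - e).
  rewrite powRM ?ler0n ?(ltW N2_gt0) //; apply: ler_wpM2r; first exact: powR_ge0.
  by apply: ler1_powR; rewrite ?ler1n // gerBl mulr_ge0 ?ltW.
have lnN2 := one_addr_ln_mul_le (ler1n R 3) N2_ge2.
rewrite [leRHS](_ : _ = 3 * N1 * (A * (2 * N2 `^ (1 - e)) * (2 * (ln_coeff * ln N2)))); last by ring.
apply: ler_wpM2l; first by rewrite mulr_ge0 // ltW.
apply: ler_pM.
- by rewrite mulr_ge0 ?powR_ge0.
- by rewrite mulr_ge0 // addr_ge0 // ln_ge0 //; lra.
- exact: ler_wpM2l.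
- by apply: ler_wpM2l.
Qed.

Lemma Tsum_le_ordered : exists2 C : R, 0 < C & forall N1 N2 : R, 2 <= N1 -> N1 <= N2 ->
  Tsum N1 N2 a b <= C * (N1 * N2) `^ (1 - a * b / 2) * ln N1 * ln N2.
Proof.
have [/andP[a0 _] /andP[b0 _]] := (ha, hb).
have A0 : 0 < (a `^ b)^-1 by rewrite invr_gt0 powR_gt0.
exists (12 * (a `^ b)^-1 * ln_coeff / ln 2).
  by apply: divr_gt0 => //; apply: mulr_gt0 => //; apply: mulr_gt0.
move=> N1 N2 N1_ge2 N12; apply: le_trans (Tsum_le_ln N1_ge2 N12) _.
set A := (a `^ b)^-1.
have N1_ge0 : 0 <= N1 by lra.
have lnN1 : 1 <= ln N1 / ln 2 by rewrite ler_pdivlMr // mul1r ler_ln ?posrE; lra.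
have K0 : 0 <= 12 * A * ln_coeff * ln N2 by rewrite !mulr_ge0 ?ln_ge0 ?ltW //; lra.
have powN := mulr_powR_le (mulr_ge0 (ltW a0) (ltW b0)) N1_ge0 N12.
rewrite [leLHS](_ : _ = 12 * A * ln_coeff * ln N2 * (N1 * N2 `^ (1 - a * b)) * 1); last by ring.
rewrite [leRHS](_ : _ = 12 * A * ln_coeff * ln N2 * (N1 * N2) `^ (1 - a * b / 2) * (ln N1 / ln 2)).
  by apply: ler_pM => //; [rewrite mulr_ge0 // mulr_ge0 ?powR_ge0 | exact: ler_wpM2l].
by field; rewrite gt_eqF.
Qed.

End Tsum_bounds.

Theorem lemma2p11 (R : realType) (a b : R) :
  0 < a <= 1 -> 0 < b <= 1 ->
  exists C : R, 0 < C /\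
    forall N1 N2 : R, 2 <= N1 -> 2 <= N2 ->
      Tsum N1 N2 a b <=
      C * ((N1 * N2) `^ (1 - a * b / 2)) * ln N1 * ln N2.
Proof.
move=> ha hb; have [C C0 TsumC] := Tsum_le_ordered ha hb.
exists C; split => // N1 N2 N1_ge2 N2_ge2.
have [N12|/ltW N21] := leP N1 N2; first exact: TsumC.
by rewrite Tsum_sym (mulrC N1) mulrAC; apply: TsumC.
Qed.
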